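(* Assume $\delta<d$, $\gamma\ge1$ and $\alpha=\gamma/(\delta-d)$. Then $$G_z^\alpha(w)=G_h(z^{-\alpha}w)+o(1)\quad\text{as } z\to\infty,$$ i.e. for every $\epsilon>0$ there is $R>0$ such that $|G_z^\alpha(w)-G_h(z^{-\alpha}w)|<\epsilon$ for all $(z,w)$ with $|z|>R$.
   Context: Let $p(z)=z^\delta+O(z^{\delta-1})$ be a monic polynomial of degree $\delta\ge 2$, and let $q(z,w)=b(z)w^d+(\text{terms of lower degree in } w)$ be a polynomial with $d=\deg_w q\ge 2$, where $b$ is a monic polynomial of degree $\gamma$. Let $f(z,w)=(p(z),q(z,w))$. Write $Q_z^n=q_{p^{n-1}(z)}\circ\cdots\circ q_{p(z)}\circ q_z$ with $q_z=q(z,\cdot)$. For $\delta<d$, $\alpha=\max\big(\{-\gamma/(d-\delta)\}\cup\{(n_j-\gamma)/(d-m_j)\}\big)$, the second set over monomials $z^{n_j}w^{m_j}$ appearing in $q$ with nonzero coefficient and $m_j<d$. $G_z^\alpha(w)=\lim_{n\to\infty}d^{-n}\log^+\big(|Q_z^n(w)|/|p^n(z)|^\alpha\big)$. Give the monomial $z^nw^m$ weight $n+\alpha m$; let $h(z,w)$ be the sum of those terms of $q$ of weight exactly $\gamma+\alpha d$ (the maximal weight; it contains $z^\gamma w^d$), and $h(c)=h(1,c)$, a one-variable polynomial of degree $d$, with Green function $G_h(c)=\lim_{n\to\infty}d^{-n}\log^+|h^n(c)|$. The value $G_h(z^{-\alpha}w)$ does not depend on the choice of branch of $z^{-\alpha}$.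 *)

From Stdlib Require Import Reals Lra List Classical ClassicalEpsilon.
Open Scope R_scope.

Definition Cx := (R * R)%type.
Definition Cx0 : Cx := (0, 0).
Definition Cx1 : Cx := (1, 0).
Definition Cadd (a b : Cx) : Cx := (fst a + fst b, snd a + snd b).
Definition Cmul (a b : Cx) : Cx :=
  (fst a * fst b - snd a * snd b, fst a * snd b + snd a * fst b).
Definition Cscal (r : R) (a : Cx) : Cx := (r * fst a, r * snd a).
Fixpoint Cpow (a : Cx) (n : nat) : Cx :=
  match n with O => Cx1 | S k => Cmul a (Cpow a k) end.
Definition Cnorm (a : Cx) : R := sqrt (fst a * fst a + snd a * snd a).
Definition Cexp (a : Cx) : Cx := (exp (fst a) * cos (snd a), exp (fst a) * sin (snd a)).

Fixpoint Csum (n : nat) (f : nat -> Cx) : Cx :=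
  match n with O => f O | S k => Cadd (Csum k f) (f (S k)) end.

Definition peval (delta : nat) (pc : nat -> Cx) (z : Cx) : Cx :=
  Csum delta (fun k => Cmul (pc k) (Cpow z k)).
Fixpoint piter (delta : nat) (pc : nat -> Cx) (n : nat) (z : Cx) : Cx :=
  match n with O => z | S k => peval delta pc (piter delta pc k z) end.

Definition qeval (N d : nat) (qc : nat -> nat -> Cx) (z w : Cx) : Cx :=
  Csum N (fun n => Csum d (fun m => Cmul (qc n m) (Cmul (Cpow z n) (Cpow w m)))).

(* Q_z^n(w) = q_{p^{n-1}(z)} o ... o q_z (w) *)
Fixpoint Qiter (delta : nat) (pc : nat -> Cx) (N d : nat) (qc : nat -> nat -> Cx)
    (n : nat) (z w : Cx) : Cx :=
  match n with
  | O => w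
  | S k => qeval N d qc (piter delta pc k z) (Qiter delta pc N d qc k z w)
  end.

Definition logplus (x : R) : R := Rmax 0 (ln x).

(* the limit of a real sequence (if it exists; 0 otherwise) *)
Definition seq_lim (u : nat -> R) : R :=
  match excluded_middle_informative (exists l, Un_cv u l) with
  | left H => proj1_sig (constructive_indefinite_description _ H)
  | right _ => 0
  end.

(* alpha = max({-gamma/(d-delta)} U {(n_j-gamma)/(d-m_j)}), over monomials
   z^n w^m of q with nonzero coefficient and m < d *)
Definition alpha_of (delta gamma N d : nat) (qc : nat -> nat -> Cx) : R :=
  let base := - INR gamma / (INR d - INR delta) in
  fold_right Rmax base
    (flat_map (fun n =>
       map (fun m =>
         if excluded_middle_informative (qc n m = Cx0) then base
         else (INR n - INR gamma) / (INR d - INR m))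
       (seq 0 d))
     (seq 0 (S N))).

(* coefficients of h(c) = h(1,c): sum of terms of q of weight n + alpha m
   equal to gamma + alpha d *)
Definition hcoef (alpha : R) (gamma N : nat) (d : nat) (qc : nat -> nat -> Cx)
    (m : nat) : Cx :=
  Csum N (fun n =>
    if Req_EM_T (INR n + alpha * INR m) (INR gamma + alpha * INR d)
    then qc n m else Cx0).

Definition heval (alpha : R) (gamma N d : nat) (qc : nat -> nat -> Cx) (c : Cx) : Cx :=
  Csum d (fun m => Cmul (hcoef alpha gamma N d qc m) (Cpow c m)).

Fixpoint hiter (alpha : R) (gamma N d : nat) (qc : nat -> nat -> Cx) (n : nat) (c : Cx) : Cx :=
  match n with O => c | S k => heval alpha gamma N d qc (hiter alpha gamma N d qc k c) end.

Definition Gh (alpha : R) (gamma N d : nat) (qc : nat -> nat -> Cx) (c : Cx) : R :=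
  seq_lim (fun n => / (INR d ^ n) * logplus (Cnorm (hiter alpha gamma N d qc n c))).

Definition Galpha (alpha : R) (delta : nat) (pc : nat -> Cx) (N d : nat)
    (qc : nat -> nat -> Cx) (z w : Cx) : R :=
  seq_lim (fun n => / (INR d ^ n) *
    logplus (Cnorm (Qiter delta pc N d qc n z w) /
             Rpower (Cnorm (piter delta pc n z)) alpha)).

From Pilot Require Import Defs.
From Stdlib Require Import Reals Lra Lia List Classical ClassicalEpsilon.
From Coquelicot Require Import Coquelicot.
(* [Defs] must take precedence over the homonymous [Cpow] of Coquelicot. *)
Import Defs.
Open Scope R_scope.

(* Pick logarithms L_n of z_n := p^n(z) by L_0 = L (a logarithm of z) and
   L_(n+1) = delta L_n + Log (z_(n+1) / z_n^delta), the principal Log of a number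
   close to 1 when |z| is large, and conjugate the fibre orbit:
   u_n := exp (-alpha L_n) Q_z^n(w).  Then |u_n| = |Q_z^n(w)| / |z_n|^alpha,
   u_0 = z^-alpha w, and u_(n+1) = r_n * sum_(i,m) q_(i,m) exp (e_(i,m) L_n) u_n^m
   with r_n close to 1 and weight excesses e_(i,m) = i + alpha m - (gamma + alpha d)
   that vanish exactly on the monomials of h and are <= -1/(d - delta) otherwise.
   So (u_n) is an eta-pseudo-orbit of h: |u_(n+1) - h(u_n)| <= eta (1 + |u_n|)^d,
   with eta -> 0 as |z| -> oo.  A stability lemma for Green functions of monic
   polynomials (both Green sequences converge geometrically, and over a fixed
   number of steps a pseudo-orbit stays relatively close to the true orbit) then
   shows that the two Green limits, G_z^alpha(w) and G_h(u_0), differ by o(1). *)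

(* Coquelicot's complex numbers [C] are the same pairs of reals as [Cx], and the
   operations of Defs are convertible to Coquelicot's; [Cring] runs [ring] on goals
   stated with the operations of either presentation. *)
Ltac Cring :=
  try change Cadd with Cplus; try change Cmul with Cmult; try change Cpow with Complex.Cpow;
  match goal with |- ?a = ?b => change (@eq C a b); ring end.

Lemma Cnorm_Cmod a : Cnorm a = Cmod a.
Proof. unfold Cnorm, Cmod. f_equal. simpl. ring. Qed.

Lemma Cpow_eq a n : Cpow a n = (a ^ n)%C.
Proof. induction n as [|n IH]; simpl; [reflexivity | rewrite IH; reflexivity]. Qed.

Lemma Cmul_eq a b : Cmul a b = (a * b)%C.
Proof. reflexivity. Qed.

Lemma Dpow_pos D n : 2 <= D -> 0 < D ^ n.
Proof. intros; apply pow_lt; lra. Qed.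

(* For D >= 2 the tail sum of D^-k is dominated by its first term. *)
Lemma inv_pow_step D m : 2 <= D -> / D ^ S m <= / D ^ m - / D ^ S m.
Proof.
  intros HD. pose proof (Dpow_pos D m HD) as Hm. simpl.
  assert (Hsplit : / (D * D ^ m) = / D * / D ^ m) by (field; split; lra).
  rewrite Hsplit. assert (0 < / D ^ m) by (apply Rinv_0_lt_compat; lra).
  assert (/ D <= / 2) by (apply Rinv_le_contravar; lra). nra.
Qed.

Lemma telescope_bound (a : nat -> R) D c : 2 <= D -> 0 <= c ->
  (forall n, Rabs (a (S n) - a n) <= c / D ^ S n) ->
  forall n k, Rabs (a (n + k)%nat - a n) <= c * (/ D ^ n - / D ^ (n + k)).
Proof.
  intros HD Hc Ha n k. induction k as [|k IH].
  - rewrite Nat.add_0_r. unfold Rminus. rewrite !Rplus_opp_r, Rabs_R0. lra.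
  - replace (n + S k)%nat with (S (n + k)) by lia.
    replace (a (S (n + k)) - a n)
      with ((a (S (n + k)) - a (n + k)%nat) + (a (n + k)%nat - a n)) by ring.
    eapply Rle_trans; [apply Rabs_triang|].
    pose proof (Ha (n + k)%nat). pose proof (inv_pow_step D (n + k) HD).
    unfold Rdiv in *. nra.
Qed.

Lemma small_over_pow D c eps : 2 <= D -> 0 < eps ->
  exists N, forall n, (N <= n)%nat -> Rabs c / D ^ n < eps.
Proof.
  intros HD He.
  assert (Hinv : Rabs (/ D) < 1).
  { rewrite Rabs_right by (left; apply Rinv_0_lt_compat; lra).
    rewrite <- Rinv_1. apply Rinv_lt_contravar; lra. }
  pose proof (Rabs_pos c) as Hc.
  destruct (pow_lt_1_zero (/ D) Hinv (eps / (Rabs c + 1))) as [N HN].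
  { apply Rdiv_lt_0_compat; lra. }
  exists N. intros n Hn. specialize (HN n Hn).
  pose proof (Dpow_pos D n HD).
  rewrite pow_inv, Rabs_right in HN by (left; apply Rinv_0_lt_compat; lra).
  apply Rmult_lt_reg_r with (/ (Rabs c + 1)); [apply Rinv_0_lt_compat; lra|].
  apply Rle_lt_trans with (/ D ^ n); [|exact HN].
  assert (0 < / D ^ n) by (apply Rinv_0_lt_compat; lra).
  assert (Rabs c * / (Rabs c + 1) <= 1).
  { apply Rmult_le_reg_r with (Rabs c + 1); [lra|]. rewrite Rmult_assoc, Rinv_l; lra. }
  unfold Rdiv. nra.
Qed.

Lemma geometric_cauchy (a : nat -> R) (D c : R) : 2 <= D -> 0 <= c ->
  (forall n, Rabs (a (S n) - a n) <= c / D ^ S n) ->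
  exists l, Un_cv a l /\ forall n, Rabs (l - a n) <= c / D ^ n.
Proof.
  intros HD Hc Ha. pose proof (telescope_bound a D c HD Hc Ha) as T.
  assert (Hb : forall n m, (n <= m)%nat -> Rabs (a m - a n) <= c / D ^ n).
  { intros n m Hnm. replace m with (n + (m - n))%nat by lia.
    eapply Rle_trans; [apply T|].
    assert (0 < / D ^ (n + (m - n))) by (apply Rinv_0_lt_compat, Dpow_pos; lra).
    unfold Rdiv. nra. }
  assert (Hcauchy : Cauchy_crit a).
  { intros eps He. destruct (small_over_pow D c (eps / 2) HD) as [N HN]; [lra|].
    exists N. intros n m Hn Hm. unfold Rdist.
    specialize (HN N (le_n N)). rewrite Rabs_right in HN by lra.
    pose proof (Hb N n Hn). pose proof (Hb N m Hm).
    replace (a n - a m) with ((a n - a N) - (a m - a N)) by ring.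
    eapply Rle_lt_trans; [apply Rabs_triang|]. rewrite Rabs_Ropp. lra. }
  destruct (Rcomplete.R_complete a Hcauchy) as [l Hl]. exists l. split; [exact Hl|].
  intros n. apply le_epsilon. intros e He.
  destruct (Hl e He) as [M HM]. specialize (HM (Nat.max n M) ltac:(lia)).
  unfold Rdist in HM. pose proof (Hb n (Nat.max n M) ltac:(lia)).
  replace (l - a n) with (- (a (Nat.max n M) - l) + (a (Nat.max n M) - a n)) by ring.
  eapply Rle_trans; [apply Rabs_triang|]. rewrite Rabs_Ropp. lra.
Qed.

Lemma seq_lim_cv u l : Un_cv u l -> seq_lim u = l.
Proof.
  intros H. unfold seq_lim. destruct excluded_middle_informative as [e|e].
  - destruct (constructive_indefinite_description _ e) as [l' Hl']. simpl.
    eapply UL_sequence; eauto.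
  - exfalso. apply e. eauto.
Qed.

Lemma Un_cv_ext (f g : nat -> R) l : (forall n, f n = g n) -> Un_cv g l -> Un_cv f l.
Proof. intros H Hg e He. destruct (Hg e He) as [N HN]. exists N. intros n Hn. rewrite H. auto. Qed.

Lemma exists_small_factor a1 b1 a2 b2 : 0 < a1 -> 0 < b1 -> 0 < a2 -> 0 < b2 ->
  exists eta, 0 < eta /\ eta * a1 <= b1 /\ eta * a2 <= b2.
Proof.
  intros. exists (Rmin (b1 / a1) (b2 / a2)).
  split; [apply Rmin_pos; apply Rdiv_lt_0_compat; assumption|]. split.
  - apply Rle_trans with (b1 / a1 * a1); [apply Rmult_le_compat_r; [lra | apply Rmin_l]|].
    right; field; lra.
  - apply Rle_trans with (b2 / a2 * a2); [apply Rmult_le_compat_r; [lra | apply Rmin_r]|].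
    right; field; lra.
Qed.

Lemma ln_le_xm1 r : 0 < r -> ln r <= r - 1.
Proof.
  intros Hr. destruct (Rle_dec (ln r) (r - 1)) as [|Hlt]; [assumption|].
  exfalso. assert (Hexp : exp (r - 1) < exp (ln r)) by (apply exp_increasing; lra).
  rewrite exp_ln in Hexp by lra. pose proof (exp_ineq1_le (r - 1)). lra.
Qed.

Lemma ln_ge_1mx r : 0 < r -> 1 - / r <= ln r.
Proof.
  intros Hr. pose proof (ln_le_xm1 (/ r) ltac:(apply Rinv_0_lt_compat; lra)) as H.
  rewrite ln_Rinv in H by lra. lra.
Qed.

Lemma ln_le_0 x : x <= 1 -> ln x <= 0.
Proof.
  intros H. destruct (Rlt_dec 0 x) as [Hx|Hx].
  - pose proof (ln_le_xm1 x Hx). lra.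
  - unfold ln. destruct (Rlt_dec 0 x); [contradiction | lra].
Qed.

Lemma ln_ge_0 x : 1 <= x -> 0 <= ln x.
Proof.
  intros H. pose proof (ln_ge_1mx x ltac:(lra)).
  assert (/ x <= 1) by (rewrite <- Rinv_1; apply Rinv_le_contravar; lra). lra.
Qed.

Lemma ln_mono x y : 0 < x -> x <= y -> ln x <= ln y.
Proof. intros. destruct (Req_dec x y). subst; lra. left; apply ln_increasing; lra. Qed.

Lemma exp_mono x y : x <= y -> exp x <= exp y.
Proof. intros. destruct (Req_dec x y). subst; lra. left; apply exp_increasing; lra. Qed.

Lemma logplus_nonneg x : 0 <= logplus x.
Proof. apply Rmax_l. Qed.

Lemma logplus_ge_ln x : ln x <= logplus x.
Proof. apply Rmax_r. Qed.

Lemma logplus_small x : x <= 1 -> logplus x = 0.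
Proof. intros. unfold logplus. pose proof (ln_le_0 x H). apply Rmax_left. lra. Qed.

Lemma logplus_big x : 1 <= x -> logplus x = ln x.
Proof. intros. unfold logplus. pose proof (ln_ge_0 x H). apply Rmax_right. lra. Qed.

Lemma logplus_le_ln x y : 1 <= y -> x <= y -> logplus x <= ln y.
Proof.
  intros. destruct (Rle_dec x 1).
  - rewrite logplus_small by assumption. apply ln_ge_0; assumption.
  - rewrite logplus_big by lra. apply ln_mono; lra.
Qed.

Lemma sin_le_id y : 0 <= y <= 1 -> y - y ^ 3 / 6 <= sin y <= y.
Proof.
  intros Hy. pose proof PI2_1.
  destruct (sin_bound y 0 ltac:(lra) ltac:(lra)) as [H1 H2].
  unfold sin_approx, sin_term in H1, H2. simpl in H1, H2.
  split.
  - eapply Rle_trans; [|exact H1]. right. field.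
  - eapply Rle_trans; [exact H2|].
    assert (y ^ 5 / 120 <= y ^ 3 / 6).
    { replace (y ^ 5) with (y ^ 3 * (y * y)) by ring.
      assert (0 <= y ^ 3) by (apply pow_le; lra). assert (y * y <= 1) by nra. nra. }
    match goal with |- ?L <= _ => replace L with (y - y ^ 3 / 6 + y ^ 5 / 120) by field end.
    lra.
Qed.

Lemma sin_abs_le y : Rabs y <= 1 -> Rabs (sin y) <= Rabs y.
Proof.
  intros Hy. destruct (Rle_dec 0 y).
  - rewrite (Rabs_right y) in Hy |- * by lra. pose proof (sin_le_id y ltac:(lra)).
    assert (y ^ 3 <= y) by (simpl; nra). rewrite Rabs_right; lra.
  - rewrite (Rabs_left y) in Hy |- * by lra. pose proof (sin_le_id (- y) ltac:(lra)) as Hs.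
    rewrite sin_neg in Hs. assert ((- y) ^ 3 <= - y) by (simpl; nra).
    rewrite Rabs_left1; lra.
Qed.

Lemma cos_ge y : Rabs y <= 1 -> 1 - y ^ 2 / 2 <= cos y.
Proof.
  intros Hy. pose proof PI2_1.
  assert (-1 <= y <= 1) by (apply Rabs_le_between in Hy; lra).
  destruct (COS y ltac:(lra) ltac:(lra)) as [H1 _].
  unfold cos_lb, cos_approx, cos_term in H1. simpl in H1.
  eapply Rle_trans; [|exact H1].
  assert (y ^ 6 / 720 <= y ^ 4 / 24).
  { replace (y ^ 6) with (y ^ 4 * (y * y)) by ring.
    assert (0 <= y ^ 4) by (replace (y ^ 4) with ((y * y) * (y * y)) by ring; nra).
    assert (y * y <= 1) by nra. nra. }
  match goal with |- _ <= ?L => replace L with (1 - y ^ 2 / 2 + y ^ 4 / 24 - y ^ 6 / 720) by field end.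
  lra.
Qed.

Lemma exp_near_0 x : Rabs x <= 1 / 2 -> Rabs (exp x - 1) <= 2 * Rabs x /\ exp x <= 2.
Proof.
  intros Hx. pose proof (exp_ineq1_le x). pose proof (exp_ineq1_le (- x)) as Hm.
  rewrite exp_Ropp in Hm. pose proof (exp_pos x).
  assert (-1 / 2 <= x <= 1 / 2) by (apply Rabs_le_between in Hx; lra).
  assert (exp x * (1 - x) <= 1).
  { apply Rmult_le_reg_r with (/ exp x); [apply Rinv_0_lt_compat; lra|].
    rewrite Rmult_comm, <- Rmult_assoc, Rinv_l by lra. lra. }
  destruct (Rle_dec 0 x).
  - rewrite !Rabs_right by lra. split; nra.
  - rewrite Rabs_left1 by nra. rewrite (Rabs_left x) by lra. split; nra.
Qed.

Lemma Cmod_le_sum (a : C) : Cmod a <= Rabs (fst a) + Rabs (snd a).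
Proof.
  destruct a as [x y]. unfold Cmod; simpl.
  pose proof (Rabs_pos x). pose proof (Rabs_pos y).
  rewrite <- (sqrt_Rsqr (Rabs x + Rabs y)) by lra.
  apply sqrt_le_1_alt. unfold Rsqr.
  assert (x * x = Rabs x * Rabs x) by (rewrite <- Rabs_mult, Rabs_right; nra).
  assert (y * y = Rabs y * Rabs y) by (rewrite <- Rabs_mult, Rabs_right; nra).
  nra.
Qed.

Lemma Cmod_rev_tri (a b : C) : Cmod b - Cmod a <= Cmod (a + b)%C.
Proof.
  assert (Cmod b <= Cmod (a + b)%C + Cmod a).
  { replace b with ((a + b) + - a)%C at 1 by ring.
    eapply Rle_trans; [apply Cmod_triangle|]. rewrite Cmod_opp. lra. }
  lra.
Qed.

Lemma Cmod_sub1 s : Rabs (Cmod s - 1) <= Cmod (s - 1)%C.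
Proof.
  pose proof (Cmod_rev_tri (s - 1)%C 1) as H1. pose proof (Cmod_rev_tri (- (s - 1))%C s) as H2.
  rewrite Cmod_opp in H2. replace (s - 1 + 1)%C with s in H1 by ring.
  replace (- (s - 1) + s)%C with (RtoC 1) in H2 by ring. rewrite Cmod_1 in H1, H2.
  apply Rabs_le; lra.
Qed.

Lemma Cexp_add a b : Cexp (a + b)%C = (Cexp a * Cexp b)%C.
Proof.
  destruct a as [x y], b as [u v]. unfold Cexp; simpl.
  rewrite exp_plus, cos_plus, sin_plus.
  apply injective_projections; simpl; ring.
Qed.

Lemma Cexp_0 : Cexp (RtoC 0) = RtoC 1.
Proof. unfold Cexp; simpl. rewrite exp_0, cos_0, sin_0. apply injective_projections; simpl; ring. Qed.

Lemma Cmod_Cexp a : Cmod (Cexp a) = exp (fst a).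
Proof.
  destruct a as [x y]. unfold Cmod, Cexp; simpl.
  replace (exp x * cos y * (exp x * cos y * 1) + exp x * sin y * (exp x * sin y * 1))
    with (exp x * exp x * (Rsqr (sin y) + Rsqr (cos y))) by (unfold Rsqr; ring).
  rewrite sin2_cos2, Rmult_1_r. apply sqrt_square. left; apply exp_pos.
Qed.

Lemma Cscal_plus r s a : Cscal (r + s) a = (Cscal r a + Cscal s a)%C.
Proof. destruct a; apply injective_projections; simpl; ring. Qed.

Lemma Cscal_assoc r s a : Cscal r (Cscal s a) = Cscal (r * s) a.
Proof. destruct a; apply injective_projections; simpl; ring. Qed.

Lemma Cscal_add r a b : Cscal r (a + b)%C = (Cscal r a + Cscal r b)%C.
Proof. destruct a, b; apply injective_projections; simpl; ring. Qed.

Lemma Cscal_0 a : Cscal 0 a = RtoC 0.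
Proof. destruct a; apply injective_projections; simpl; ring. Qed.

Lemma Cmod_Cscal r a : Cmod (Cscal r a) = Rabs r * Cmod a.
Proof.
  destruct a as [x y]; unfold Cmod, Cscal; simpl. rewrite <- sqrt_Rsqr_abs.
  rewrite <- sqrt_mult by (try apply Rle_0_sqr; nra). f_equal. unfold Rsqr. ring.
Qed.

Lemma Cexp_nat k a : Cexp (Cscal (INR k) a) = (Cexp a ^ k)%C.
Proof.
  induction k as [|k IH].
  - simpl. rewrite Cscal_0. apply Cexp_0.
  - rewrite S_INR, Cscal_plus, Cexp_add, IH. simpl.
    replace (Cscal 1 a) with a by (destruct a; apply injective_projections; simpl; ring).
    apply Cmult_comm.
Qed.

Lemma Cexp_near1 a : Cmod a <= 1 / 2 -> Cmod (Cexp a - 1)%C <= 10 * Cmod a.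
Proof.
  intros Ha. destruct a as [x y].
  pose proof (Rmax_Cmod (x, y)) as Hm. simpl in Hm.
  pose proof (Rmax_l (Rabs x) (Rabs y)); pose proof (Rmax_r (Rabs x) (Rabs y)).
  destruct (exp_near_0 x ltac:(lra)) as [E1 E2].
  pose proof (sin_abs_le y ltac:(lra)). pose proof (cos_ge y ltac:(lra)).
  pose proof (COS_bound y) as [_ Cb]. pose proof (exp_pos x).
  replace (Cexp (x, y) - 1)%C with ((exp x * cos y - 1, exp x * sin y) : C)
    by (unfold Cexp; apply injective_projections; simpl; ring).
  eapply Rle_trans; [apply Cmod_le_sum|]. simpl.
  replace (exp x * cos y - 1) with ((exp x - 1) + exp x * (cos y - 1)) by ring.
  assert (Rabs (cos y - 1) <= Rabs y).
  { rewrite Rabs_left1 by lra. assert (y ^ 2 <= Rabs y).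
    { rewrite <- (pow2_abs y). pose proof (Rabs_pos y). simpl. nra. }
    lra. }
  eapply Rle_trans; [apply Rplus_le_compat_r, Rabs_triang|].
  rewrite !Rabs_mult, (Rabs_right (exp x)) by lra.
  pose proof (Rabs_pos (cos y - 1)). pose proof (Rabs_pos (sin y)).
  assert (exp x * Rabs (cos y - 1) <= 2 * Rabs y) by nra.
  assert (exp x * Rabs (sin y) <= 2 * Rabs y) by nra.
  lra.
Qed.

Lemma atan_pos_bound t : 0 <= t <= 1 -> 0 <= atan t <= 2 * t.
Proof.
  intros Ht. pose proof PI_4.
  assert (0 <= atan t).
  { destruct (Req_dec t 0) as [->|]; [rewrite atan_0; lra|].
    rewrite <- atan_0. left; apply atan_increasing; lra. }
  assert (atan t <= 1).
  { destruct (Req_dec t 1) as [->|]; [rewrite atan_1; lra|].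
    left. eapply Rlt_le_trans; [apply atan_increasing|rewrite atan_1]; lra. }
  split; [assumption|].
  pose proof (sin_le_id (atan t) ltac:(lra)) as [S1 _]. rewrite sin_atan in S1.
  assert (1 <= sqrt (1 + t²)).
  { rewrite <- sqrt_1 at 1. apply sqrt_le_1_alt. unfold Rsqr; nra. }
  assert (t / sqrt (1 + t²) <= t).
  { unfold Rdiv. assert (/ sqrt (1 + t²) <= / 1) by (apply Rinv_le_contravar; lra).
    rewrite Rinv_1 in *. assert (0 < / sqrt (1 + t²)) by (apply Rinv_0_lt_compat; lra). nra. }
  assert (atan t ^ 3 <= atan t) by (simpl; nra).
  lra.
Qed.

Lemma atan_abs_bound t : Rabs t <= 1 -> Rabs (atan t) <= 2 * Rabs t.
Proof.
  intros Ht. destruct (Rle_dec 0 t).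
  - rewrite (Rabs_right t) in Ht |- * by lra. pose proof (atan_pos_bound t ltac:(lra)).
    rewrite Rabs_right; lra.
  - rewrite (Rabs_left t) in Ht |- * by lra. pose proof (atan_pos_bound (- t) ltac:(lra)) as Ha.
    rewrite atan_opp in Ha. rewrite Rabs_left1; lra.
Qed.

(* A logarithm on the right half plane: the principal Log there. *)
Definition clog (s : C) : C := (ln (Cmod s), atan (snd s / fst s)).

Lemma Cexp_clog s : 0 < fst s -> Cexp (clog s) = s.
Proof.
  destruct s as [x y]. simpl. intros Hx. unfold Cexp, clog, Cmod; simpl.
  replace (x * (x * 1) + y * (y * 1)) with (x ^ 2 + y ^ 2) by ring.
  assert (Hp : 0 < x ^ 2 + y ^ 2) by (simpl; nra).
  rewrite exp_ln by (apply sqrt_lt_R0; auto).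
  rewrite cos_atan, sin_atan.
  assert (E : sqrt (1 + (y / x)²) = sqrt (x ^ 2 + y ^ 2) / x).
  { replace (1 + (y / x)²) with ((x ^ 2 + y ^ 2) / (x * x)) by (unfold Rsqr; field; lra).
    rewrite sqrt_div_alt by nra. rewrite sqrt_square by lra. reflexivity. }
  rewrite E. assert (0 < sqrt (x ^ 2 + y ^ 2)) by (apply sqrt_lt_R0; auto).
  set (S := sqrt (x ^ 2 + y ^ 2)) in *. clearbody S.
  apply injective_projections; simpl; field; split; lra.
Qed.

Lemma ln_near1 r c : c <= 1 / 2 -> Rabs (r - 1) <= c -> Rabs (ln r) <= 2 * c.
Proof.
  intros Hc Hr. apply Rabs_le_between in Hr.
  pose proof (ln_le_xm1 r ltac:(lra)). pose proof (ln_ge_1mx r ltac:(lra)) as Hlow.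
  replace (1 - / r) with ((r - 1) * / r) in Hlow by (field; lra).
  assert (Hinv : 0 < / r <= 2)
    by (split; [apply Rinv_0_lt_compat; lra|
                replace 2 with (/ (1 / 2)) by field; apply Rinv_le_contravar; lra]).
  apply Rabs_le. destruct (Rle_dec 1 r); nra.
Qed.

Lemma clog_small s : Cmod (s - 1)%C <= 1 / 2 ->
  0 < fst s /\ Cmod (clog s) <= 6 * Cmod (s - 1)%C.
Proof.
  intros Hs. set (c := Cmod (s - 1)%C) in *.
  pose proof (Rmax_Cmod (s - 1)%C) as Hm. pose proof (Cmod_sub1 s) as Hr. fold c in Hm, Hr.
  destruct s as [x y]. simpl in Hm.
  replace (x + - (1)) with (x - 1) in Hm by ring. replace (y + - (0)) with y in Hm by ring.
  pose proof (Rmax_l (Rabs (x - 1)) (Rabs y)); pose proof (Rmax_r (Rabs (x - 1)) (Rabs y)).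
  assert (Hx : - c <= x - 1 <= c) by (apply Rabs_le_between; lra).
  split; [simpl; lra|].
  eapply Rle_trans; [apply Cmod_le_sum|]. unfold clog; simpl.
  pose proof (ln_near1 (Cmod (x, y)) c Hs Hr).
  assert (Rabs (y / x) <= 2 * c).
  { unfold Rdiv. rewrite Rabs_mult, Rabs_inv, (Rabs_right x) by lra.
    assert (/ x <= 2) by (replace 2 with (/ (1 / 2)) by field; apply Rinv_le_contravar; lra).
    assert (0 < / x) by (apply Rinv_0_lt_compat; lra). pose proof (Rabs_pos y). nra. }
  pose proof (atan_abs_bound (y / x) ltac:(lra)). lra.
Qed.

Lemma Cpow_real_near1 b s c : Cmod (s - 1)%C <= c -> 6 * (Rabs b + 1) * c <= 1 / 2 ->
  Cmod (Cexp (Cscal b (clog s)) - 1)%C <= 60 * (Rabs b + 1) * c.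
Proof.
  intros Hs Hc. pose proof (Rabs_pos b). pose proof (Cmod_ge_0 (s - 1)%C).
  destruct (clog_small s ltac:(nra)) as [_ Hlog].
  assert (Hsmall : Cmod (Cscal b (clog s)) <= 6 * (Rabs b + 1) * c).
  { rewrite Cmod_Cscal. pose proof (Cmod_ge_0 (clog s)).
    apply Rle_trans with ((Rabs b + 1) * (6 * c)); [apply Rmult_le_compat; lra | lra]. }
  eapply Rle_trans; [apply Cexp_near1; lra | lra].
Qed.

Lemma Csum_S n f : Csum (S n) f = (Csum n f + f (S n))%C.
Proof. reflexivity. Qed.

Lemma Csum_ext n f g : (forall k, (k <= n)%nat -> f k = g k) -> Csum n f = Csum n g.
Proof.
  induction n as [|n IH]; intros H; simpl; [apply H; lia|].
  rewrite IH, (H (S n)) by first [lia | intros; apply H; lia]. reflexivity.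
Qed.

Lemma Csum_plus n f g : Csum n (fun k => f k + g k)%C = (Csum n f + Csum n g)%C.
Proof. induction n as [|n IH]; [reflexivity|]. simpl. rewrite IH. Cring. Qed.

Lemma Csum_minus n f g : Csum n (fun k => f k - g k)%C = (Csum n f - Csum n g)%C.
Proof. induction n as [|n IH]; [reflexivity|]. simpl. rewrite IH. Cring. Qed.

Lemma Csum_mul_l n c f : Csum n (fun k => c * f k)%C = (c * Csum n f)%C.
Proof. induction n as [|n IH]; [reflexivity|]. simpl. rewrite IH. Cring. Qed.

Lemma Csum_mul_r n c f : Csum n (fun k => f k * c)%C = (Csum n f * c)%C.
Proof. rewrite Cmult_comm, <- Csum_mul_l. apply Csum_ext. intros; apply Cmult_comm. Qed.

Lemma Csum_swap N M f :
  Csum N (fun i => Csum M (fun j => f i j)) = Csum M (fun j => Csum N (fun i => f i j)).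
Proof. induction N as [|N IH]; [reflexivity|]. simpl. rewrite IH, <- Csum_plus. reflexivity. Qed.

Lemma Csum_zero n f : (forall k, (k <= n)%nat -> f k = RtoC 0) -> Csum n f = RtoC 0.
Proof.
  induction n as [|n IH]; intros H; simpl; [apply H; lia|].
  rewrite IH, (H (S n)) by first [lia | intros; apply H; lia]. Cring.
Qed.

Lemma Csum_single n j f : (j <= n)%nat ->
  (forall k, (k <= n)%nat -> k <> j -> f k = RtoC 0) -> Csum n f = f j.
Proof.
  induction n as [|n IH]; intros Hj H.
  - simpl. replace j with O by lia. reflexivity.
  - simpl. destruct (Nat.eq_dec j (S n)) as [->|Hne].
    + rewrite Csum_zero by (intros; apply H; lia). Cring.
    + rewrite IH, (H (S n)) by (try lia; intros; apply H; lia). Cring.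
Qed.

Lemma Csum_norm n f : Cmod (Csum n f) <= sum_f_R0 (fun k => Cmod (f k)) n.
Proof.
  induction n as [|n IH]; simpl; [lra|].
  eapply Rle_trans; [apply Cmod_triangle | lra].
Qed.

Lemma sum_nonneg (a : nat -> R) n : (forall k, (k <= n)%nat -> 0 <= a k) -> 0 <= sum_f_R0 a n.
Proof.
  intros H. induction n as [|n IH]; simpl; [apply H; lia|].
  pose proof (H (S n) ltac:(lia)). pose proof (IH ltac:(intros; apply H; lia)). lra.
Qed.

Lemma sum_ge_term (a : nat -> R) n j : (forall k, (k <= n)%nat -> 0 <= a k) ->
  (j <= n)%nat -> a j <= sum_f_R0 a n.
Proof.
  intros H Hj. induction n as [|n IH]; simpl; [replace j with O by lia; lra|].
  destruct (Nat.eq_dec j (S n)) as [->|Hne].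
  - pose proof (sum_nonneg a n ltac:(intros; apply H; lia)). lra.
  - pose proof (IH ltac:(intros; apply H; lia) ltac:(lia)). pose proof (H (S n) ltac:(lia)). lra.
Qed.

Lemma sum_mul_r (a : nat -> R) n c : sum_f_R0 (fun k => a k * c) n = sum_f_R0 a n * c.
Proof. induction n as [|n IH]; simpl; [ring | rewrite IH; ring]. Qed.

(* The bracket <u> = 1 + |u| controls polynomial growth uniformly, small u included. *)
Definition bracket (u : C) := 1 + Cmod u.

Definition poly_eval (d : nat) (hc : nat -> Cx) (u : C) : Cx :=
  Csum d (fun m => Cmul (hc m) (Cpow u m)).
Definition coef_sum (d : nat) (hc : nat -> Cx) := sum_f_R0 (fun m => Cmod (hc m)) d.

Lemma bracket_ge1 u : 1 <= bracket u.
Proof. unfold bracket; pose proof (Cmod_ge_0 u); lra. Qed.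

Lemma coef_sum_nonneg d hc : 0 <= coef_sum d hc.
Proof. apply sum_nonneg; intros; apply Cmod_ge_0. Qed.

Lemma coef_sum_ge1 d hc : hc d = Cx1 -> 1 <= coef_sum d hc.
Proof.
  intros H. unfold coef_sum.
  eapply Rle_trans; [|apply (sum_ge_term (fun k => Cmod (hc k)) d d); [intros; apply Cmod_ge_0 | lia]].
  cbv beta. rewrite H. change Cx1 with (RtoC 1). rewrite Cmod_1. lra.
Qed.

Lemma Cmod_pow_le_bracket u m d : (m <= d)%nat -> Cmod (u ^ m)%C <= bracket u ^ d.
Proof.
  intros Hm. rewrite Cmod_pow. apply Rle_trans with (bracket u ^ m).
  - apply pow_incr. unfold bracket. pose proof (Cmod_ge_0 u). lra.
  - apply Rle_pow; [apply bracket_ge1 | exact Hm].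
Qed.

Lemma poly_bound d hc u : Cmod (poly_eval d hc u) <= coef_sum d hc * bracket u ^ d.
Proof.
  unfold poly_eval, coef_sum. eapply Rle_trans; [apply Csum_norm|]. rewrite <- sum_mul_r.
  apply sum_Rle. intros k Hk. rewrite Cmul_eq, Cpow_eq, Cmod_mult.
  apply Rmult_le_compat_l; [apply Cmod_ge_0 | apply Cmod_pow_le_bracket; exact Hk].
Qed.

Lemma poly_lower_terms dl hc u : 1 <= Cmod u ->
  Cmod (Csum dl (fun m => Cmul (hc m) (Cpow u m))) <= coef_sum (S dl) hc * Cmod u ^ dl.
Proof.
  intros Hu. eapply Rle_trans; [apply Csum_norm|].
  apply Rle_trans with (sum_f_R0 (fun m => Cmod (hc m)) dl * Cmod u ^ dl).
  - rewrite <- sum_mul_r. apply sum_Rle. intros k Hk.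
    rewrite Cmul_eq, Cpow_eq, Cmod_mult, Cmod_pow.
    apply Rmult_le_compat_l; [apply Cmod_ge_0 | apply Rle_pow; assumption].
  - apply Rmult_le_compat_r; [apply pow_le; lra|].
    unfold coef_sum. simpl. pose proof (Cmod_ge_0 (hc (S dl))). lra.
Qed.

Lemma poly_lower d hc u : (1 <= d)%nat -> hc d = Cx1 -> 1 <= Cmod u ->
  2 * coef_sum d hc <= Cmod u -> Cmod u ^ d / 2 <= Cmod (poly_eval d hc u).
Proof.
  intros Hd Hl H1 H2. destruct d as [|dl]; [lia|].
  pose proof (poly_lower_terms dl hc u H1) as Hlow.
  unfold poly_eval. rewrite Csum_S, Hl, Cmul_eq, Cpow_eq. change Cx1 with (RtoC 1). rewrite Cmult_1_l.
  pose proof (Cmod_rev_tri (Csum dl (fun m => Cmul (hc m) (Cpow u m))) (u ^ S dl)%C) as Hrev.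
  rewrite Cmod_pow, <- tech_pow_Rmult in Hrev. rewrite <- tech_pow_Rmult.
  assert (0 <= Cmod u ^ dl) by (apply pow_le; lra).
  pose proof (coef_sum_nonneg (S dl) hc). nra.
Qed.

Lemma pow_diff (u v : C) T m : Cmod u <= T -> Cmod v <= T ->
  Cmod (u ^ S m - v ^ S m)%C <= INR (S m) * Cmod (u - v)%C * T ^ m.
Proof.
  intros Hu Hv. assert (0 <= T) by (pose proof (Cmod_ge_0 u); lra).
  induction m as [|m IH].
  - simpl. replace (u * 1 - v * 1)%C with (u - v)%C by ring. lra.
  - replace (u ^ S (S m) - v ^ S (S m))%C
      with (u * (u ^ S m - v ^ S m) + (u - v) * v ^ S m)%C by (simpl; ring).
    eapply Rle_trans; [apply Cmod_triangle|]. rewrite !Cmod_mult, Cmod_pow.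
    assert (Cmod v ^ S m <= T ^ S m) by (apply pow_incr; split; [apply Cmod_ge_0 | assumption]).
    pose proof (Cmod_ge_0 (u - v)%C). pose proof (Cmod_ge_0 u).
    pose proof (Cmod_ge_0 (u ^ S m - v ^ S m)%C).
    assert (Cmod u * Cmod (u ^ S m - v ^ S m)%C <= T * (INR (S m) * Cmod (u - v)%C * T ^ m))
      by (apply Rmult_le_compat; auto).
    rewrite S_INR. simpl pow in *. nra.
Qed.

Lemma poly_lip d hc u v e : 0 <= e <= 1 -> Cmod (u - v)%C <= e * bracket v ->
  Cmod (poly_eval d hc u - poly_eval d hc v)%C <= coef_sum d hc * (INR d * 2 ^ d * e * bracket v ^ d).
Proof.
  intros He Huv. unfold poly_eval. rewrite <- Csum_minus.
  eapply Rle_trans; [apply Csum_norm|].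
  unfold coef_sum. rewrite <- sum_mul_r. apply sum_Rle. intros m Hm.
  change (Cmul (hc m) (Cpow u m) - Cmul (hc m) (Cpow v m))%C
    with (hc m * Cpow u m - hc m * Cpow v m)%C.
  rewrite (Cpow_eq u), (Cpow_eq v). replace (hc m * u ^ m - hc m * v ^ m)%C with (hc m * (u ^ m - v ^ m))%C by ring.
  rewrite Cmod_mult. apply Rmult_le_compat_l; [apply Cmod_ge_0|].
  pose proof (bracket_ge1 v) as HM. pose proof (pos_INR d).
  set (B := bracket v) in *.
  assert (Hrhs : 0 <= INR d * 2 ^ d * e * B ^ d)
    by (pose proof (pow_le 2 d ltac:(lra)); pose proof (pow_le B d ltac:(lra));
        apply Rmult_le_pos; [apply Rmult_le_pos; [apply Rmult_le_pos|]|]; lra).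
  destruct m as [|m'].
  - simpl. replace (1 - 1)%C with (RtoC 0) by ring. rewrite Cmod_0. lra.
  - assert (Hu : Cmod u <= 2 * B).
    { pose proof (Cmod_rev_tri (- (u - v))%C u) as Hr. rewrite Cmod_opp in Hr.
      replace (- (u - v) + u)%C with v in Hr by ring.
      unfold B, bracket in *. pose proof (Cmod_ge_0 v). nra. }
    assert (Hv : Cmod v <= 2 * B) by (unfold B, bracket in *; pose proof (Cmod_ge_0 v); lra).
    eapply Rle_trans; [apply (pow_diff u v (2 * B) m' Hu Hv)|].
    assert (HSm : INR (S m') <= INR d) by (apply le_INR; lia).
    assert (Hpow : B * (2 * B) ^ m' <= (2 * B) ^ d).
    { apply Rle_trans with ((2 * B) ^ S m').
      - simpl. assert (0 <= (2 * B) ^ m') by (apply pow_le; lra). nra.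
      - apply Rle_pow; [lra | lia]. }
    pose proof (Cmod_ge_0 (u - v)%C). pose proof (pos_INR (S m')).
    assert (0 <= (2 * B) ^ m') by (apply pow_le; lra).
    apply Rle_trans with (INR (S m') * e * (B * (2 * B) ^ m')).
    { replace (INR (S m') * e * (B * (2 * B) ^ m'))
        with (INR (S m') * (e * B) * (2 * B) ^ m') by ring.
      apply Rmult_le_compat_r; [assumption|]. apply Rmult_le_compat_l; assumption. }
    replace (INR d * 2 ^ d * e * B ^ d) with (INR d * e * (2 * B) ^ d) by (rewrite Rpow_mult_distr; ring).
    assert (0 <= B * (2 * B) ^ m') by (apply Rmult_le_pos; lra).
    apply Rmult_le_compat; try lra; [apply Rmult_le_pos; lra | apply Rmult_le_compat_r; lra].
Qed.

(* Stability of Green functions under pseudo-orbits. *)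

Definition lognorm (u : C) := logplus (Cmod u).

Definition green_seq (d : nat) (u : nat -> C) (n : nat) := / INR d ^ n * lognorm (u n).

Definition pseudo_orbit (H : C -> C) (d : nat) (eta : R) (u : nat -> C) :=
  forall n, Cmod (u (S n) - H (u n))%C <= eta * bracket (u n) ^ d.

Lemma pseudo_orbit_mono H d eta eta' u : eta <= eta' ->
  pseudo_orbit H d eta u -> pseudo_orbit H d eta' u.
Proof.
  intros He Hu n. eapply Rle_trans; [apply Hu|]. apply Rmult_le_compat_r; [|exact He].
  apply pow_le. pose proof (bracket_ge1 (u n)). lra.
Qed.

Lemma bracket_close u v e : 0 <= e <= 1 -> Cmod (u - v)%C <= e * bracket v ->
  bracket u <= 2 * bracket v.
Proof.
  intros He Huv. pose proof (Cmod_rev_tri (- (u - v))%C u) as Hr. rewrite Cmod_opp in Hr.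
  replace (- (u - v) + u)%C with v in Hr by ring.
  unfold bracket in *. pose proof (Cmod_ge_0 v). nra.
Qed.

Lemma lognorm_compare u v e : 0 <= e <= 1 / 4 -> Cmod (u - v)%C <= e * bracket v ->
  Rabs (lognorm u - lognorm v) <= 4 * e.
Proof.
  intros He Huv. unfold lognorm, bracket in *. pose proof (Cmod_ge_0 v).
  assert (Hhi : Cmod u <= Cmod (u - v)%C + Cmod v).
  { replace u with ((u - v) + v)%C at 1 by ring. apply Cmod_triangle. }
  assert (Hlo : Cmod v <= Cmod (u - v)%C + Cmod u).
  { replace v with (- (u - v) + u)%C at 1 by ring.
    eapply Rle_trans; [apply Cmod_triangle|]. rewrite Cmod_opp. lra. }
  pose proof (logplus_nonneg (Cmod u)).
  pose proof (ln_le_xm1 (1 + 2 * e) ltac:(lra)).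
  destruct (Rle_dec 1 (Cmod v)) as [Hv|Hv].
  - rewrite (logplus_big (Cmod v)) by lra.
    assert (Hup : logplus (Cmod u) <= ln (1 + 2 * e) + ln (Cmod v)).
    { rewrite <- ln_mult by lra. apply logplus_le_ln; nra. }
    assert (Hdown : ln ((1 - 2 * e) * Cmod v) <= logplus (Cmod u)).
    { eapply Rle_trans; [|apply logplus_ge_ln]. apply ln_mono; nra. }
    rewrite ln_mult in Hdown by lra.
    pose proof (ln_ge_1mx (1 - 2 * e) ltac:(lra)).
    assert (/ (1 - 2 * e) <= 1 + 4 * e).
    { apply Rmult_le_reg_l with (1 - 2 * e); [lra|]. rewrite Rinv_r by lra. nra. }
    apply Rabs_le. lra.
  - rewrite (logplus_small (Cmod v)) by lra.
    pose proof (logplus_le_ln (Cmod u) (1 + 2 * e) ltac:(lra) ltac:(nra)).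
    apply Rabs_le. lra.
Qed.

Lemma limits_close (a b : nat -> R) la lb c D n0 eps :
  (forall n, Rabs (la - a n) <= c / D ^ n) -> (forall n, Rabs (lb - b n) <= c / D ^ n) ->
  c / D ^ n0 < eps / 4 -> Rabs (a n0 - b n0) <= eps / 4 -> Rabs (la - lb) < eps.
Proof.
  intros Ha Hb Hc Hab. specialize (Ha n0). specialize (Hb n0).
  replace (la - lb) with ((la - a n0) + (a n0 - b n0) - (lb - b n0)) by ring.
  eapply Rle_lt_trans; [apply Rabs_triang|]. rewrite Rabs_Ropp.
  eapply Rle_lt_trans; [apply Rplus_le_compat_r, Rabs_triang|].
  pose proof (Rabs_pos (la - a n0)). lra.
Qed.

Section GreenStability.

Variable H : C -> C.
Variables (d : nat) (A R0 K : R).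
Hypothesis Hd : (2 <= d)%nat.
Hypothesis HR0 : 2 <= R0.
Hypothesis HA : 0 <= A.
Hypothesis HK : 0 <= K.
Hypothesis Hbnd : forall u, Cmod (H u) <= A * bracket u ^ d.
Hypothesis Hlow : forall u, R0 <= Cmod u -> Cmod u ^ d / 2 <= Cmod (H u).
Hypothesis Hlip : forall u v e, 0 <= e <= 1 -> Cmod (u - v)%C <= e * bracket v ->
  Cmod (H u - H v)%C <= K * e * bracket v ^ d.

Lemma INR_d_ge2 : 2 <= INR d.
Proof. apply le_INR in Hd. simpl in Hd. lra. Qed.

Lemma pow2_ge1 : 1 <= 2 ^ d.
Proof. apply pow_R1_Rle. lra. Qed.

(* The constant bounding |log+ |u_(n+1)| - d log+ |u_n|| along a pseudo-orbit. *)
Definition step_const :=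
  ln 4 + ln ((A + 1) * 2 ^ d) + ln ((A + 1) * (1 + R0) ^ d) + INR d * ln R0.

Lemma step_const_terms :
  0 <= ln 4 /\ 0 <= ln ((A + 1) * 2 ^ d) /\ 0 <= ln ((A + 1) * (1 + R0) ^ d) /\
  0 <= INR d * ln R0.
Proof.
  pose proof INR_d_ge2. pose proof pow2_ge1.
  assert (1 <= (1 + R0) ^ d) by (apply pow_R1_Rle; lra).
  repeat split; try apply ln_ge_0; try nra.
  pose proof (ln_ge_0 R0 ltac:(lra)). nra.
Qed.

Lemma step_const_nonneg : 0 <= step_const.
Proof. unfold step_const. pose proof step_const_terms. lra. Qed.

Lemma pseudo_step_modulus u u' eta : 0 <= eta ->
  Cmod (u' - H u)%C <= eta * bracket u ^ d ->
  Cmod (H u) - eta * bracket u ^ d <= Cmod u' <= Cmod (H u) + eta * bracket u ^ d.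
Proof.
  intros He Hs. split.
  - pose proof (Cmod_rev_tri (u' - H u)%C (H u)) as Hr.
    replace (u' - H u + H u)%C with u' in Hr by ring. lra.
  - replace u' with ((u' - H u) + H u)%C at 1 by ring.
    eapply Rle_trans; [apply Cmod_triangle | lra].
Qed.

Lemma step_bound u u' eta : 0 <= eta -> eta * 2 ^ d <= 1 / 4 ->
  Cmod (u' - H u)%C <= eta * bracket u ^ d ->
  Rabs (lognorm u' - INR d * lognorm u) <= step_const.
Proof.
  intros He1 He2 Hs. unfold lognorm.
  pose proof INR_d_ge2. pose proof pow2_ge1. pose proof step_const_terms.
  destruct (pseudo_step_modulus u u' eta He1 Hs) as [Hu'lo Hu'hi].
  pose proof (Hbnd u). pose proof (bracket_ge1 u).
  assert (0 <= bracket u ^ d) by (apply pow_le; lra).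
  assert (eta <= 1) by nra.
  unfold step_const. destruct (Rle_dec R0 (Cmod u)) as [Hb|Hb].
  - pose proof (Hlow u Hb).
    assert (HM : bracket u ^ d <= 2 ^ d * Cmod u ^ d).
    { rewrite <- Rpow_mult_distr. apply pow_incr. unfold bracket; split; lra. }
    set (X := Cmod u ^ d) in *.
    assert (HX : 4 <= X).
    { unfold X. eapply Rle_trans; [|apply Rle_pow; [lra | exact Hd]]. simpl. nra. }
    rewrite !logplus_big by nra.
    assert (Hln : INR d * ln (Cmod u) = ln X) by (unfold X; rewrite ln_pow; lra).
    assert (Hlo : ln (X / 4) <= ln (Cmod u')) by (apply ln_mono; nra).
    unfold Rdiv in Hlo. rewrite ln_mult, ln_Rinv in Hlo by lra.
    assert (Hhi : ln (Cmod u') <= ln ((A + 1) * 2 ^ d * X)) by (apply ln_mono; nra).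
    rewrite ln_mult in Hhi by nra.
    apply Rabs_le. lra.
  - pose proof (Cmod_ge_0 u).
    assert (bracket u ^ d <= (1 + R0) ^ d) by (apply pow_incr; unfold bracket; split; lra).
    assert (1 <= (1 + R0) ^ d) by (apply pow_R1_Rle; lra).
    pose proof (logplus_le_ln (Cmod u') ((A + 1) * (1 + R0) ^ d) ltac:(nra) ltac:(nra)).
    pose proof (logplus_le_ln (Cmod u) R0 ltac:(lra) ltac:(lra)).
    pose proof (logplus_nonneg (Cmod u')). pose proof (logplus_nonneg (Cmod u)).
    apply Rabs_le. nra.
Qed.

Lemma green_seq_converges u eta : 0 <= eta -> eta * 2 ^ d <= 1 / 4 -> pseudo_orbit H d eta u ->
  exists l, Un_cv (green_seq d u) l /\ forall n, Rabs (l - green_seq d u n) <= step_const / INR d ^ n.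
Proof.
  intros He1 He2 Hs. apply geometric_cauchy; [apply INR_d_ge2 | apply step_const_nonneg|].
  intros n. unfold green_seq.
  pose proof INR_d_ge2. pose proof (Dpow_pos (INR d) n H0).
  replace (/ INR d ^ S n * lognorm (u (S n)) - / INR d ^ n * lognorm (u n))
    with (/ INR d ^ S n * (lognorm (u (S n)) - INR d * lognorm (u n))) by (simpl; field; lra).
  rewrite Rabs_mult, Rabs_right by (left; apply Rinv_0_lt_compat, Dpow_pos; lra).
  unfold Rdiv. rewrite Rmult_comm. apply Rmult_le_compat_r.
  - left; apply Rinv_0_lt_compat, Dpow_pos; lra.
  - eapply step_bound; eauto.
Qed.

(* Growth of <v>^d through H, and the resulting growth factor of relative errors. *)
Definition growth_const := 2 ^ S d + (1 + R0) ^ d.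
Definition error_factor := (2 ^ d + K) * growth_const.

Lemma error_factor_ge1 : 1 <= error_factor.
Proof.
  unfold error_factor, growth_const. pose proof pow2_ge1.
  assert (1 <= 2 ^ S d) by (apply pow_R1_Rle; lra).
  assert (1 <= (1 + R0) ^ d) by (apply pow_R1_Rle; lra). nra.
Qed.

Lemma bracket_pow_le v : bracket v ^ d <= growth_const * bracket (H v).
Proof.
  pose proof (bracket_ge1 (H v)). pose proof (Cmod_ge_0 v). unfold growth_const.
  assert (0 <= 2 ^ S d) by (apply pow_le; lra). assert (0 <= (1 + R0) ^ d) by (apply pow_le; lra).
  destruct (Rle_dec R0 (Cmod v)) as [Hv|Hv].
  - pose proof (Hlow v Hv). pose proof (Cmod_ge_0 (H v)). pose proof pow2_ge1.
    assert (bracket v ^ d <= 2 ^ d * Cmod v ^ d).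
    { rewrite <- Rpow_mult_distr. apply pow_incr. unfold bracket; split; lra. }
    assert (2 ^ d * (Cmod v ^ d / 2) <= 2 ^ d * Cmod (H v)) by (apply Rmult_le_compat_l; lra).
    simpl pow. unfold bracket in *. nra.
  - assert (bracket v ^ d <= (1 + R0) ^ d) by (apply pow_incr; unfold bracket; split; lra).
    nra.
Qed.

Lemma orbit_step_compare u u' v eta e : 0 <= eta -> 0 <= e <= 1 ->
  Cmod (u - v)%C <= e * bracket v -> Cmod (u' - H u)%C <= eta * bracket u ^ d ->
  Cmod (u' - H v)%C <= error_factor * (eta + e) * bracket (H v).
Proof.
  intros He Hee Huv Hu'. pose proof pow2_ge1.
  pose proof (Hlip u v e Hee Huv) as HL.
  assert (HMu : bracket u ^ d <= 2 ^ d * bracket v ^ d).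
  { rewrite <- Rpow_mult_distr. apply pow_incr. pose proof (bracket_ge1 u).
    pose proof (bracket_close u v e Hee Huv). lra. }
  assert (0 <= bracket v ^ d) by (apply pow_le; pose proof (bracket_ge1 v); lra).
  assert (Hstep : Cmod (u' - H v)%C <= (2 ^ d + K) * (eta + e) * bracket v ^ d).
  { replace (u' - H v)%C with ((u' - H u) + (H u - H v))%C by ring.
    eapply Rle_trans; [apply Cmod_triangle|].
    assert (eta * bracket u ^ d <= eta * (2 ^ d * bracket v ^ d)) by (apply Rmult_le_compat_l; lra).
    assert (0 <= 2 ^ d * e * bracket v ^ d) by (apply Rmult_le_pos; [apply Rmult_le_pos|]; lra).
    assert (0 <= K * eta * bracket v ^ d) by (apply Rmult_le_pos; [apply Rmult_le_pos|]; lra).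
    nra. }
  pose proof (bracket_pow_le v).
  assert (0 <= (2 ^ d + K) * (eta + e)) by (apply Rmult_le_pos; lra).
  unfold error_factor. eapply Rle_trans; [exact Hstep|].
  replace ((2 ^ d + K) * growth_const * (eta + e) * bracket (H v))
    with ((2 ^ d + K) * (eta + e) * (growth_const * bracket (H v))) by ring.
  apply Rmult_le_compat_l; assumption.
Qed.

Lemma compare_orbits u v eta n0 : 0 <= eta -> eta * INR n0 * error_factor ^ n0 <= 1 ->
  pseudo_orbit H d eta u -> (forall n, v (S n) = H (v n)) -> u O = v O ->
  forall k, (k <= n0)%nat -> Cmod (u k - v k)%C <= eta * INR k * error_factor ^ k * bracket (v k).
Proof.
  intros He Hn Hu Hv H0 k. pose proof error_factor_ge1 as HF.
  induction k as [|k IH]; intros Hk.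
  - rewrite H0. replace (v O - v O)%C with (RtoC 0) by ring. rewrite Cmod_0.
    simpl. pose proof (bracket_ge1 (v O)). nra.
  - specialize (IH ltac:(lia)). set (e := eta * INR k * error_factor ^ k) in *.
    assert (HFk : 1 <= error_factor ^ k) by (apply pow_R1_Rle; lra).
    assert (He0 : 0 <= e) by (unfold e; pose proof (pos_INR k); apply Rmult_le_pos; [apply Rmult_le_pos|]; lra).
    assert (He1 : e <= 1).
    { apply Rle_trans with (eta * INR n0 * error_factor ^ n0); [|exact Hn].
      assert (INR k <= INR n0) by (apply le_INR; lia).
      assert (error_factor ^ k <= error_factor ^ n0) by (apply Rle_pow; [lra | lia]).
      pose proof (pos_INR k). unfold e.
      apply Rmult_le_compat; [apply Rmult_le_pos; lra | lra | apply Rmult_le_compat_l; lra | lra]. }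
    rewrite Hv.
    eapply Rle_trans; [exact (orbit_step_compare (u k) (u (S k)) (v k) eta e He ltac:(lra) IH (Hu k))|].
    apply Rmult_le_compat_r; [pose proof (bracket_ge1 (H (v k))); lra|].
    unfold e. rewrite S_INR. simpl pow.
    assert (error_factor <= error_factor * error_factor ^ k) by nra.
    assert (eta * error_factor <= eta * (error_factor * error_factor ^ k)) by (apply Rmult_le_compat_l; lra).
    nra.
Qed.

Lemma green_stability eps : 0 < eps -> exists eta, 0 < eta /\
  forall u v : nat -> C, pseudo_orbit H d eta u ->
    (forall n, v (S n) = H (v n)) -> u O = v O ->
    exists lu lv, Un_cv (green_seq d u) lu /\ Un_cv (green_seq d v) lv /\ Rabs (lu - lv) < eps.
Proof.
  intros Heps. pose proof INR_d_ge2 as HD. pose proof step_const_nonneg.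
  pose proof error_factor_ge1. pose proof pow2_ge1.
  destruct (small_over_pow (INR d) step_const (eps / 4) HD ltac:(lra)) as [n0 Hn0].
  specialize (Hn0 n0 (le_n n0)). rewrite Rabs_right in Hn0 by lra.
  pose proof (Dpow_pos (INR d) n0 HD) as HDn.
  assert (HFn : 1 <= error_factor ^ n0) by (apply pow_R1_Rle; lra).
  set (B := (INR n0 + 1) * error_factor ^ n0).
  assert (HB : 1 <= B) by (unfold B; pose proof (pos_INR n0); nra).
  destruct (exists_small_factor (2 ^ d) (1 / 4) B (Rmin (1 / 4) (eps * INR d ^ n0 / 16)))
    as [eta [Heta [Heta1 HetaB]]]; try lra.
  { apply Rmin_pos; [lra|]. apply Rdiv_lt_0_compat; nra. }
  assert (Heta2 : eta * B <= 1 / 4) by (eapply Rle_trans; [exact HetaB | apply Rmin_l]).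
  assert (Heta3 : eta * B <= eps * INR d ^ n0 / 16) by (eapply Rle_trans; [exact HetaB | apply Rmin_r]).
  exists eta. split; [exact Heta|]. intros u v Hu Hv H0v.
  destruct (green_seq_converges u eta ltac:(lra) Heta1 Hu) as [lu [Hlu Blu]].
  destruct (green_seq_converges v 0 ltac:(lra) ltac:(lra)) as [lv [Hlv Blv]].
  { intros n. rewrite Hv. replace (H (v n) - H (v n))%C with (RtoC 0) by ring. rewrite Cmod_0.
    pose proof (bracket_ge1 (v n)). assert (0 <= bracket (v n) ^ d) by (apply pow_le; lra). lra. }
  exists lu, lv. split; [exact Hlu|]. split; [exact Hlv|].
  assert (HeB : 0 <= eta * INR n0 * error_factor ^ n0 <= eta * B)
    by (unfold B; pose proof (pos_INR n0); split; [apply Rmult_le_pos; [apply Rmult_le_pos|]|]; nra).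
  pose proof (compare_orbits u v eta n0 ltac:(lra) ltac:(lra) Hu Hv H0v n0 (le_n n0)) as Hc.
  pose proof (lognorm_compare (u n0) (v n0) (eta * INR n0 * error_factor ^ n0) ltac:(lra) Hc) as Hlog.
  apply (limits_close _ _ lu lv step_const (INR d) n0 eps Blu Blv Hn0).
  unfold green_seq.
  replace (/ INR d ^ n0 * lognorm (u n0) - / INR d ^ n0 * lognorm (v n0))
    with ((lognorm (u n0) - lognorm (v n0)) / INR d ^ n0) by (field; lra).
  rewrite Rabs_div, (Rabs_right (INR d ^ n0)) by lra.
  apply Rle_trans with (4 * (eps * INR d ^ n0 / 16) / INR d ^ n0).
  - unfold Rdiv. apply Rmult_le_compat_r; [left; apply Rinv_0_lt_compat; lra | lra].
  - right. field. lra.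
Qed.

End GreenStability.

Lemma monic_green_stability d hc eps : (2 <= d)%nat -> hc d = Cx1 -> 0 < eps ->
  exists eta, 0 < eta /\
  forall u v : nat -> C, pseudo_orbit (poly_eval d hc) d eta u ->
    (forall n, v (S n) = poly_eval d hc (v n)) -> u O = v O ->
    exists lu lv, Un_cv (green_seq d u) lu /\ Un_cv (green_seq d v) lv /\ Rabs (lu - lv) < eps.
Proof.
  intros Hd Hlead Heps.
  pose proof (coef_sum_nonneg d hc) as HA. pose proof (pow_le 2 d ltac:(lra)). pose proof (pos_INR d).
  apply (green_stability (poly_eval d hc) d (coef_sum d hc) (2 * coef_sum d hc + 2)
           (coef_sum d hc * (INR d * 2 ^ d))); try assumption; try lra.
  - apply Rmult_le_pos; [lra | apply Rmult_le_pos; lra].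
  - intros u. apply poly_bound.
  - intros u Hu. apply poly_lower; [lia | assumption | lra | lra].
  - intros u v e He Huv. pose proof (poly_lip d hc u v e He Huv). nra.
Qed.

(* The orbit z_n = p^n(z) of a monic p of degree delta >= 2, and its logarithms. *)

Lemma p_close delta pc z : (1 <= delta)%nat -> pc delta = Cx1 -> 1 <= Cmod z ->
  Cmod (peval delta pc z - z ^ delta)%C <= coef_sum delta pc * Cmod z ^ (delta - 1).
Proof.
  intros Hdelta Hm Hz. destruct delta as [|dl]; [lia|].
  replace (S dl - 1)%nat with dl by lia.
  pose proof (poly_lower_terms dl pc z Hz) as Hlow.
  unfold peval. rewrite Csum_S, Hm, Cmul_eq, Cpow_eq. change Cx1 with (RtoC 1).
  set (low := Csum dl (fun k => Cmul (pc k) (Cpow z k))) in *. clearbody low. change C in low.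
  replace (low + 1 * z ^ S dl - z ^ S dl)%C with low by ring. exact Hlow.
Qed.

Lemma p_ratio_close delta pc z : (1 <= delta)%nat -> pc delta = Cx1 -> 1 <= Cmod z ->
  Cmod (peval delta pc z * / z ^ delta - 1)%C <= coef_sum delta pc / Cmod z.
Proof.
  intros Hdelta Hm Hz. assert (Hz0 : z <> RtoC 0) by (intro E; rewrite E, Cmod_0 in Hz; lra).
  assert (Hzn : (z ^ delta)%C <> RtoC 0) by (apply Cpow_nz; auto).
  replace (peval delta pc z * / z ^ delta - 1)%C
    with ((peval delta pc z - z ^ delta) * / z ^ delta)%C by (field; auto).
  rewrite Cmod_mult, Cmod_inv, Cmod_pow by auto.
  pose proof (p_close delta pc z Hdelta Hm Hz).
  assert (0 < Cmod z ^ delta) by (apply pow_lt; lra).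
  apply Rle_trans with (coef_sum delta pc * Cmod z ^ (delta - 1) * / Cmod z ^ delta).
  - apply Rmult_le_compat_r; [left; apply Rinv_0_lt_compat|]; assumption.
  - assert (Hpow : Cmod z ^ delta = Cmod z * Cmod z ^ (delta - 1))
      by (replace delta with (S (delta - 1)) at 1 by lia; reflexivity).
    rewrite Hpow. right. field. split; [lra | apply pow_nonzero; lra].
Qed.

Lemma p_grow delta pc z : (2 <= delta)%nat -> pc delta = Cx1 ->
  2 * coef_sum delta pc <= Cmod z -> Cmod z <= Cmod (peval delta pc z).
Proof.
  intros Hdelta Hm Hz. pose proof (coef_sum_ge1 delta pc Hm).
  pose proof (poly_lower delta pc z ltac:(lia) Hm ltac:(lra) Hz) as Hlow.
  assert (Cmod z <= Cmod z ^ delta / 2).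
  { replace delta with (S (delta - 1)) by lia. simpl.
    assert (Cmod z <= Cmod z ^ (delta - 1)).
    { rewrite <- (pow_1 (Cmod z)) at 1. apply Rle_pow; [lra | lia]. }
    nra. }
  unfold poly_eval in Hlow. unfold peval. lra.
Qed.

Lemma p_orbit_grows delta pc z : (2 <= delta)%nat -> pc delta = Cx1 ->
  2 * coef_sum delta pc <= Cmod z -> forall n, Cmod z <= Cmod (piter delta pc n z).
Proof.
  intros Hdelta Hm Hz n. induction n as [|n IH]; simpl; [lra|].
  eapply Rle_trans; [exact IH|]. apply p_grow; [assumption | assumption | lra].
Qed.

Definition p_ratio delta pc (z : C) k : C :=
  (piter delta pc (S k) z * / (piter delta pc k z) ^ delta)%C.

Lemma p_ratio_uniform delta pc z : (2 <= delta)%nat -> pc delta = Cx1 ->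
  2 * coef_sum delta pc <= Cmod z ->
  forall n, Cmod (p_ratio delta pc z n - 1)%C <= coef_sum delta pc / Cmod z.
Proof.
  intros Hdelta Hm Hz n. pose proof (coef_sum_ge1 delta pc Hm).
  pose proof (p_orbit_grows delta pc z Hdelta Hm Hz n).
  eapply Rle_trans; [apply (p_ratio_close delta pc); [lia | assumption | lra]|].
  unfold Rdiv. apply Rmult_le_compat_l; [lra | apply Rinv_le_contravar; lra].
Qed.

Fixpoint log_orbit delta pc (z L : C) n : C :=
  match n with
  | O => L
  | S k => (Cscal (INR delta) (log_orbit delta pc z L k) + clog (p_ratio delta pc z k))%C
  end.

Lemma Cexp_log_orbit delta pc (z L : C) : (2 <= delta)%nat -> pc delta = Cx1 ->
  2 * coef_sum delta pc <= Cmod z -> Cexp L = z ->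
  forall n, Cexp (log_orbit delta pc z L n) = piter delta pc n z.
Proof.
  intros Hdelta Hm Hz HL n. pose proof (coef_sum_ge1 delta pc Hm).
  induction n as [|n IH]; [exact HL|].
  simpl log_orbit. rewrite Cexp_add, Cexp_nat, IH.
  assert (Hr : coef_sum delta pc / Cmod z <= 1 / 2).
  { apply Rmult_le_reg_r with (Cmod z); [lra|]. unfold Rdiv. rewrite Rmult_assoc, Rinv_l; lra. }
  pose proof (p_ratio_uniform delta pc z Hdelta Hm Hz n).
  destruct (clog_small (p_ratio delta pc z n) ltac:(lra)) as [Hpos _].
  rewrite Cexp_clog by exact Hpos. unfold p_ratio.
  assert (Hnz : piter delta pc n z <> RtoC 0).
  { intro E. pose proof (p_orbit_grows delta pc z Hdelta Hm Hz n). rewrite E, Cmod_0 in *. lra. }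
  assert ((piter delta pc n z ^ delta)%C <> RtoC 0) by (apply Cpow_nz; auto).
  set (a := piter delta pc n z) in *. set (b := piter delta pc (S n) z).
  clearbody a b. change C in a, b.
  match goal with |- ?x = ?y => change (@eq C x y) end. field. auto.
Qed.

(* Weights.  The monomial z^i w^m has weight i + alpha m; its excess over the
   maximal weight gamma + alpha d is [weight_excess].  The monomials of h are those
   with zero excess. *)
Definition weight_excess (al : R) (gamma d i m : nat) : R :=
  INR i + al * INR m - (INR gamma + al * INR d).

Lemma fold_max_ge (l : list R) b x : In x l -> x <= fold_right Rmax b l.
Proof.
  induction l as [|y l IH]; simpl; intros H; [contradiction|].
  destruct H as [->|H]; [apply Rmax_l|]. eapply Rle_trans; [apply IH; auto | apply Rmax_r].
Qed.

Lemma alpha_ge delta gamma N d qc i m : (i <= N)%nat -> (m < d)%nat -> qc i m <> Cx0 ->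
  (INR i - INR gamma) / (INR d - INR m) <= alpha_of delta gamma N d qc.
Proof.
  intros Hi Hm Hq. unfold alpha_of. apply fold_max_ge. apply in_flat_map. exists i. split.
  - apply in_seq; lia.
  - apply in_map_iff. exists m. split; [|apply in_seq; lia].
    destruct excluded_middle_informative; [contradiction | reflexivity].
Qed.

Section Weights.

Variables (delta gamma N d : nat) (qc : nat -> nat -> Cx) (al : R).
Hypothesis Hdd : (delta < d)%nat.
Hypothesis Hal : al * (INR delta - INR d) = INR gamma.
Hypothesis Hmax : forall i m, (i <= N)%nat -> (m < d)%nat -> qc i m <> Cx0 ->
  (INR i - INR gamma) / (INR d - INR m) <= al.
Hypothesis Hb : forall i, (gamma < i)%nat -> qc i d = Cx0.

Lemma weight_excess_nonpos i m : (i <= N)%nat -> (m <= d)%nat -> qc i m <> Cx0 ->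
  weight_excess al gamma d i m <= 0.
Proof.
  intros Hi Hm Hq. unfold weight_excess. destruct (Nat.eq_dec m d) as [->|Hne].
  - destruct (Compare_dec.le_lt_dec i gamma) as [Hle|Hlt].
    + apply le_INR in Hle. lra.
    + exfalso; apply Hq, Hb, Hlt.
  - assert (Hmd : (m < d)%nat) by lia. pose proof (Hmax i m Hi Hmd Hq) as Hs.
    assert (0 < INR d - INR m) by (apply lt_INR in Hmd; lra).
    apply Rmult_le_compat_r with (r := INR d - INR m) in Hs; [|lra].
    unfold Rdiv in Hs. rewrite Rmult_assoc, Rinv_l, Rmult_1_r in Hs by lra. nra.
Qed.

(* Since alpha (d - delta) = -gamma, the excess times d - delta is an integer. *)
Lemma weight_excess_integral i m :
  IZR ((Z.of_nat i - Z.of_nat gamma) * (Z.of_nat d - Z.of_nat delta)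
       - Z.of_nat gamma * (Z.of_nat m - Z.of_nat d))
  = weight_excess al gamma d i m * (INR d - INR delta).
Proof.
  rewrite minus_IZR, !mult_IZR, !minus_IZR, <- !INR_IZR_INZ. unfold weight_excess.
  rewrite <- Hal. ring.
Qed.

Lemma weight_gap i m : (i <= N)%nat -> (m <= d)%nat -> qc i m <> Cx0 ->
  weight_excess al gamma d i m <> 0 -> weight_excess al gamma d i m <= - / (INR d - INR delta).
Proof.
  intros Hi Hm Hq Hne. pose proof (weight_excess_nonpos i m Hi Hm Hq) as Hle.
  pose proof (weight_excess_integral i m) as Hz.
  set (e := weight_excess al gamma d i m) in *.
  assert (Hgap : 0 < INR d - INR delta) by (apply lt_INR in Hdd; lra).
  match type of Hz with IZR ?k = _ =>
    assert (Hneg : IZR k < 0) by (rewrite Hz; assert (e < 0) by lra; nra);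
    apply lt_IZR in Hneg; assert (Hk : (k <= -1)%Z) by lia; apply IZR_le in Hk end.
  rewrite Hz in Hk.
  apply Rmult_le_reg_r with (INR d - INR delta); [lra|].
  replace (- / (INR d - INR delta) * (INR d - INR delta)) with (-1) by (field; lra). lra.
Qed.

End Weights.

(* The conjugated orbit u_n = exp (-alpha L_n) Q_z^n(w) and its recursion. *)

Definition twisted_q N d qc al gamma (Ln U : C) : C :=
  Csum N (fun i => Csum d (fun m =>
    qc i m * Cexp (Cscal (weight_excess al gamma d i m) Ln) * U ^ m))%C.

Definition conj_orbit delta pc N d qc al (z L w : C) n : C :=
  (Cexp (Cscal (- al) (log_orbit delta pc z L n)) * Qiter delta pc N d qc n z w)%C.

Lemma Cpow_mul_distr (a b : C) m : ((a * b) ^ m = a ^ m * b ^ m)%C.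
Proof. induction m as [|m IH]; simpl; [ring | rewrite IH; ring]. Qed.

Lemma conj_step_identity delta gamma N d qc (Ln lam W : C) al :
  al * (INR delta - INR d) = INR gamma ->
  (Cexp (Cscal (- al) (Cscal (INR delta) Ln + lam)) * qeval N d qc (Cexp Ln) W)%C =
  (Cexp (Cscal (- al) lam) * twisted_q N d qc al gamma Ln (Cexp (Cscal (- al) Ln) * W))%C.
Proof.
  intros Hal. rewrite Cscal_add, Cscal_assoc, Cexp_add. unfold qeval, twisted_q.
  set (X := Cexp (Cscal (- al * INR delta) Ln)).
  transitivity (Cexp (Cscal (- al) lam) * (X * Csum N (fun i => Csum d (fun m =>
    Cmul (qc i m) (Cmul (Cpow (Cexp Ln) i) (Cpow W m))))))%C; [Cring|].
  f_equal. rewrite <- Csum_mul_l. apply Csum_ext. intros i _.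
  rewrite <- Csum_mul_l. apply Csum_ext. intros m _.
  change Cmul with Cmult. change Cpow with Complex.Cpow.
  rewrite Cpow_mul_distr, <- !Cexp_nat, Cscal_assoc. unfold X.
  transitivity (qc i m * Cexp (Cscal (- al * INR delta + INR i) Ln) * W ^ m)%C.
  - rewrite Cscal_plus, Cexp_add. Cring.
  - replace (- al * INR delta + INR i)
      with (weight_excess al gamma d i m + INR m * - al) by (unfold weight_excess; rewrite <- Hal; ring).
    rewrite Cscal_plus, Cexp_add. Cring.
Qed.

Lemma conj_orbit_S delta pc N d gamma qc al z L w n :
  al * (INR delta - INR d) = INR gamma ->
  Cexp (log_orbit delta pc z L n) = piter delta pc n z ->
  conj_orbit delta pc N d qc al z L w (S n) =
  (Cexp (Cscal (- al) (clog (p_ratio delta pc z n))) *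
   twisted_q N d qc al gamma (log_orbit delta pc z L n) (conj_orbit delta pc N d qc al z L w n))%C.
Proof.
  intros Hal HLn. unfold conj_orbit. simpl log_orbit. simpl Qiter.
  rewrite <- HLn. exact (conj_step_identity delta gamma N d qc _ _ _ al Hal).
Qed.

Definition coef_sum2 N d (qc : nat -> nat -> Cx) :=
  sum_f_R0 (fun i => sum_f_R0 (fun m => Cmod (qc i m)) d) N.

Lemma heval_expand al gamma N d qc U :
  heval al gamma N d qc U = Csum N (fun i => Csum d (fun m =>
    (if Req_EM_T (INR i + al * INR m) (INR gamma + al * INR d) then qc i m else Cx0) * U ^ m))%C.
Proof.
  rewrite Csum_swap. unfold heval. apply Csum_ext. intros m _. unfold hcoef.
  rewrite Cmul_eq, Cpow_eq, <- Csum_mul_r. reflexivity.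
Qed.

Lemma twisted_close al gamma N d qc (Ln U : C) th : 0 <= th ->
  (forall i m, (i <= N)%nat -> (m <= d)%nat -> qc i m <> Cx0 ->
     weight_excess al gamma d i m <> 0 ->
     Cmod (Cexp (Cscal (weight_excess al gamma d i m) Ln)) <= th) ->
  Cmod (twisted_q N d qc al gamma Ln U - heval al gamma N d qc U)%C
    <= coef_sum2 N d qc * (th * bracket U ^ d).
Proof.
  intros Hth HE. rewrite heval_expand. unfold twisted_q. rewrite <- Csum_minus.
  eapply Rle_trans; [apply Csum_norm|]. unfold coef_sum2. rewrite <- sum_mul_r.
  apply sum_Rle. intros i Hi. cbv beta. rewrite <- Csum_minus.
  eapply Rle_trans; [apply Csum_norm|]. rewrite <- sum_mul_r. apply sum_Rle. intros m Hm. cbv beta.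
  pose proof (Cmod_pow_le_bracket U m d Hm) as HUm.
  pose proof (Cmod_ge_0 (qc i m)).
  destruct (Req_EM_T (INR i + al * INR m) (INR gamma + al * INR d)) as [Heq|Hne].
  - replace (weight_excess al gamma d i m) with 0 by (unfold weight_excess; lra).
    rewrite Cscal_0, Cexp_0.
    replace (qc i m * 1 * U ^ m - qc i m * U ^ m)%C with (RtoC 0) by Cring.
    rewrite Cmod_0. apply Rmult_le_pos; [lra|]. apply Rmult_le_pos; [lra|].
    pose proof (Cmod_ge_0 (U ^ m)%C). lra.
  - change Cx0 with (RtoC 0).
    replace (qc i m * Cexp (Cscal (weight_excess al gamma d i m) Ln) * U ^ m - 0 * U ^ m)%C
      with (qc i m * Cexp (Cscal (weight_excess al gamma d i m) Ln) * U ^ m)%C by Cring.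
    rewrite !Cmod_mult, Rmult_assoc.
    destruct (classic (qc i m = Cx0)) as [Hq|Hq].
    + rewrite Hq. change Cx0 with (RtoC 0). rewrite Cmod_0, !Rmult_0_l. lra.
    + apply Rmult_le_compat_l; [lra|].
      apply Rmult_le_compat; try apply Cmod_ge_0; try assumption.
      apply HE; try assumption. unfold weight_excess. lra.
Qed.

Lemma off_weight_damped e (Ln : C) g th : 0 < th <= 1 -> 0 < g -> e <= - / g ->
  g * (- ln th) <= fst Ln -> Cmod (Cexp (Cscal e Ln)) <= th.
Proof.
  intros Hth Hg He HL. rewrite Cmod_Cexp. simpl fst. rewrite <- (exp_ln th) by lra.
  apply exp_mono. pose proof (ln_le_0 th ltac:(lra)).
  assert (0 <= g * (- ln th)) by (apply Rmult_le_pos; lra).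
  assert (Hig : 0 < / g) by (apply Rinv_0_lt_compat; lra).
  apply Rle_trans with (- / g * fst Ln); [nra|].
  apply Rle_trans with (- / g * (g * (- ln th))); [nra|].
  right. field. lra.
Qed.

Lemma twisted_step_bound (r Q hu : C) tau a b : 0 <= tau <= 1 -> Cmod (r - 1)%C <= tau ->
  Cmod (Q - hu)%C <= a -> Cmod hu <= b -> Cmod (r * Q - hu)%C <= 2 * a + tau * b.
Proof.
  intros Htau Hr HQ Hh.
  assert (Hr2 : Cmod r <= 2).
  { replace r with ((r - 1) + 1)%C by ring. eapply Rle_trans; [apply Cmod_triangle|].
    rewrite Cmod_1. lra. }
  replace (r * Q - hu)%C with (r * (Q - hu) + (r - 1) * hu)%C by ring.
  eapply Rle_trans; [apply Cmod_triangle|]. rewrite !Cmod_mult.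
  apply Rplus_le_compat; apply Rmult_le_compat; try apply Cmod_ge_0; assumption.
Qed.

Section ConjugatedOrbit.

Variables (delta gamma N d : nat) (pc : nat -> Cx) (qc : nat -> nat -> Cx) (al : R).
Hypothesis Hdelta : (2 <= delta)%nat.
Hypothesis Hpmon : pc delta = Cx1.
Hypothesis Hdd : (delta < d)%nat.
Hypothesis Hal : al * (INR delta - INR d) = INR gamma.
Hypothesis Hmax : forall i m, (i <= N)%nat -> (m < d)%nat -> qc i m <> Cx0 ->
  (INR i - INR gamma) / (INR d - INR m) <= al.
Hypothesis Hb : forall i, (gamma < i)%nat -> qc i d = Cx0.

Lemma conj_orbit_step z L w n th tau :
  2 * coef_sum delta pc <= Cmod z -> Cexp L = z -> 0 <= tau <= 1 -> 0 < th <= 1 ->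
  Cmod (Cexp (Cscal (- al) (clog (p_ratio delta pc z n))) - 1)%C <= tau ->
  (INR d - INR delta) * (- ln th) <= ln (Cmod z) ->
  Cmod (conj_orbit delta pc N d qc al z L w (S n)
        - heval al gamma N d qc (conj_orbit delta pc N d qc al z L w n))%C
    <= (2 * coef_sum2 N d qc * th + tau * coef_sum d (hcoef al gamma N d qc))
       * bracket (conj_orbit delta pc N d qc al z L w n) ^ d.
Proof.
  intros Hz HL Htau Hth Hr Hlz.
  pose proof (Cexp_log_orbit delta pc z L Hdelta Hpmon Hz HL n) as HLn.
  set (Ln := log_orbit delta pc z L n) in *.
  set (U := conj_orbit delta pc N d qc al z L w n).
  assert (HfstL : fst Ln = ln (Cmod (piter delta pc n z))) by (rewrite <- HLn, Cmod_Cexp, ln_exp; reflexivity).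
  assert (Hgrow : ln (Cmod z) <= fst Ln).
  { rewrite HfstL. pose proof (coef_sum_ge1 delta pc Hpmon).
    apply ln_mono; [lra | apply p_orbit_grows; assumption]. }
  assert (Hgap : 0 < INR d - INR delta) by (apply lt_INR in Hdd; lra).
  rewrite (conj_orbit_S delta pc N d gamma qc al z L w n Hal HLn).
  replace ((2 * coef_sum2 N d qc * th + tau * coef_sum d (hcoef al gamma N d qc)) * bracket U ^ d)
    with (2 * (coef_sum2 N d qc * (th * bracket U ^ d))
          + tau * (coef_sum d (hcoef al gamma N d qc) * bracket U ^ d)) by ring.
  apply twisted_step_bound; [assumption | assumption | | apply poly_bound].
  apply twisted_close; [lra|]. intros i m Hi Hm Hq Hne.
  apply (off_weight_damped _ Ln (INR d - INR delta) th Hth Hgap); [|lra].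
  exact (weight_gap delta gamma N d qc al Hdd Hal Hmax Hb i m Hi Hm Hq Hne).
Qed.

Lemma conj_orbit_pseudo_orbit_large z w L th tau :
  0 < th <= 1 -> 0 < tau <= 1 -> Cexp L = z -> 2 * coef_sum delta pc <= Cmod z ->
  60 * (Rabs al + 1) * (coef_sum delta pc / Cmod z) <= tau ->
  (INR d - INR delta) * (- ln th) <= ln (Cmod z) ->
  pseudo_orbit (heval al gamma N d qc) d
    (2 * coef_sum2 N d qc * th + tau * coef_sum d (hcoef al gamma N d qc))
    (conj_orbit delta pc N d qc al z L w).
Proof.
  intros Hth Htau HL Hz Hratio Hlz n. apply conj_orbit_step; try assumption; try lra.
  pose proof (p_ratio_uniform delta pc z Hdelta Hpmon Hz n) as Hs.
  pose proof (Rabs_pos al). pose proof (coef_sum_ge1 delta pc Hpmon).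
  assert (0 <= coef_sum delta pc / Cmod z) by (apply Rdiv_le_0_compat; lra).
  eapply Rle_trans; [apply (Cpow_real_near1 (- al) _ _ Hs)|]; rewrite Rabs_Ropp; lra.
Qed.

Lemma conj_orbit_pseudo_orbit eta : 0 < eta -> exists Rad, 0 < Rad /\
  forall z w L, Rad < Cmod z -> Cexp L = z ->
    pseudo_orbit (heval al gamma N d qc) d eta (conj_orbit delta pc N d qc al z L w).
Proof.
  intros Heta.
  set (P := coef_sum delta pc). set (A := coef_sum d (hcoef al gamma N d qc)).
  set (Bq := coef_sum2 N d qc). set (c := 60 * (Rabs al + 1)).
  pose proof (coef_sum_ge1 delta pc Hpmon) as HP. fold P in HP.
  assert (HA : 0 <= A) by apply coef_sum_nonneg.
  assert (HBq : 0 <= Bq) by (apply sum_nonneg; intros; apply sum_nonneg; intros; apply Cmod_ge_0).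
  assert (Hc : 60 <= c) by (unfold c; pose proof (Rabs_pos al); lra).
  destruct (exists_small_factor 1 1 (4 * (Bq + 1)) eta) as [th [Hth [Hth1 Hth2]]]; try lra.
  destruct (exists_small_factor 1 1 (2 * (A + 1)) eta) as [tau [Htau [Htau1 Htau2]]]; try lra.
  set (gap := INR d - INR delta).
  pose proof (exp_pos (gap * (- ln th))).
  assert (0 <= c * P / tau) by (apply Rdiv_le_0_compat; nra).
  exists (2 * P + c * P / tau + exp (gap * (- ln th)) + 1). split; [lra|].
  intros z w L Hz HL.
  apply (pseudo_orbit_mono _ _ (2 * Bq * th + tau * A)); [nra|].
  apply conj_orbit_pseudo_orbit_large; fold P c gap; try assumption; try lra.
  - apply Rmult_le_reg_r with (Cmod z / tau); [apply Rdiv_lt_0_compat; lra|].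
    replace (c * (P / Cmod z) * (Cmod z / tau)) with (c * P / tau) by (field; lra).
    replace (tau * (Cmod z / tau)) with (Cmod z) by (field; lra). lra.
  - rewrite <- (ln_exp (gap * (- ln th))). apply ln_mono; lra.
Qed.

End ConjugatedOrbit.

Lemma conj_orbit_modulus delta pc N d qc al z L w n :
  Cexp (log_orbit delta pc z L n) = piter delta pc n z ->
  Cmod (conj_orbit delta pc N d qc al z L w n)
  = Cnorm (Qiter delta pc N d qc n z w) / Rpower (Cnorm (piter delta pc n z)) al.
Proof.
  intros HLn. rewrite !Cnorm_Cmod. unfold conj_orbit, Rpower.
  rewrite Cmod_mult, Cmod_Cexp, <- HLn, Cmod_Cexp, ln_exp. simpl fst.
  replace (- al * fst (log_orbit delta pc z L n)) with (- (al * fst (log_orbit delta pc z L n))) by ring.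
  rewrite exp_Ropp. unfold Rdiv. ring.
Qed.

Lemma Galpha_limit delta pc N d qc al z L w l : (2 <= delta)%nat -> pc delta = Cx1 ->
  2 * coef_sum delta pc <= Cmod z -> Cexp L = z ->
  Un_cv (green_seq d (conj_orbit delta pc N d qc al z L w)) l ->
  Galpha al delta pc N d qc z w = l.
Proof.
  intros Hdelta Hpmon Hz HL Hl. apply seq_lim_cv. eapply Un_cv_ext; [|exact Hl].
  intros n. unfold green_seq, lognorm.
  rewrite (conj_orbit_modulus delta pc N d qc al z L w n); [reflexivity|].
  apply Cexp_log_orbit; assumption.
Qed.

Lemma Gh_limit al gamma N d qc c l :
  Un_cv (green_seq d (fun n => hiter al gamma N d qc n c)) l -> Gh al gamma N d qc c = l.
Proof.
  intros Hl. apply seq_lim_cv. eapply Un_cv_ext; [|exact Hl].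
  intros n. unfold green_seq, lognorm. rewrite Cnorm_Cmod. reflexivity.
Qed.

(* h is monic of degree d: its w^d coefficient collects the single monomial z^gamma w^d. *)
Lemma hcoef_lead al gamma N d qc : (gamma <= N)%nat -> qc gamma d = Cx1 ->
  hcoef al gamma N d qc d = Cx1.
Proof.
  intros HgN Hbmon. unfold hcoef. rewrite (Csum_single N gamma); [| exact HgN |].
  - cbv beta. destruct Req_EM_T as [E|E]; [exact Hbmon | exfalso; apply E; reflexivity].
  - intros k Hk Hkg. cbv beta. destruct Req_EM_T as [E|E]; [|reflexivity].
    exfalso. apply Hkg, INR_eq. lra.
Qed.

Theorem proposition5p11
  (delta : nat) (pc : nat -> Cx)
  (N d gamma : nat) (qc : nat -> nat -> Cx)
  (* p monic of degree delta >= 2 *)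
  (Hdelta : (2 <= delta)%nat)
  (Hpmon : pc delta = Cx1)
  (Hpdeg : forall k, (delta < k)%nat -> pc k = Cx0)
  (* q has degree d >= 2 in w, z-degree at most N *)
  (Hd : (2 <= d)%nat)
  (HqN : forall n m, (N < n)%nat -> qc n m = Cx0)
  (Hqd : forall n m, (d < m)%nat -> qc n m = Cx0)
  (* leading coefficient b(z) = sum_n qc n d z^n monic of degree gamma *)
  (Hbmon : qc gamma d = Cx1)
  (Hbdeg : forall n, (gamma < n)%nat -> qc n d = Cx0)
  (* hypotheses of the proposition *)
  (Hdd : (delta < d)%nat)
  (Hgamma : (1 <= gamma)%nat)
  (Halpha : alpha_of delta gamma N d qc = INR gamma / (INR delta - INR d)) :
  forall eps : R, 0 < eps ->
  exists Rad : R, 0 < Rad /\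
    forall z w : Cx, Rad < Cnorm z ->
      (* any branch of z^{-alpha}: exp(-alpha * L) with exp L = z *)
      forall L : Cx, Cexp L = z ->
      Rabs (Galpha (alpha_of delta gamma N d qc) delta pc N d qc z w
            - Gh (alpha_of delta gamma N d qc) gamma N d qc
                 (Cmul (Cexp (Cscal (- alpha_of delta gamma N d qc) L)) w)) < eps.
Proof.
  intros eps Heps. set (al := alpha_of delta gamma N d qc).
  assert (Hal : al * (INR delta - INR d) = INR gamma).
  { unfold al. rewrite Halpha. field. apply lt_INR in Hdd. lra. }
  assert (HgN : (gamma <= N)%nat).
  { destruct (Compare_dec.le_lt_dec gamma N) as [|Hlt]; [assumption|].
    pose proof (HqN gamma d Hlt) as E. rewrite Hbmon in E. injection E. lra. }
  (* Green stability of h gives the admissible error eta ... *)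
  destruct (monic_green_stability d (hcoef al gamma N d qc) eps Hd
              (hcoef_lead al gamma N d qc HgN Hbmon) Heps) as [eta [Heta Hstable]].
  (* ... which the conjugated orbit achieves once |z| is large. *)
  destruct (conj_orbit_pseudo_orbit delta gamma N d pc qc al Hdelta Hpmon Hdd Hal
              (alpha_ge delta gamma N d qc) Hbdeg eta Heta) as [Rad0 [HRad0 Hpseudo]].
  exists (Rad0 + 2 * coef_sum delta pc). pose proof (coef_sum_ge1 delta pc Hpmon).
  split; [lra|]. intros z w Hz L HL. rewrite Cnorm_Cmod in Hz.
  destruct (Hstable (conj_orbit delta pc N d qc al z L w)
              (fun n => hiter al gamma N d qc n (conj_orbit delta pc N d qc al z L w O))
              (Hpseudo z w L ltac:(lra) HL) (fun n => eq_refl) eq_refl)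
    as [lu [lv [Hlu [Hlv Hclose]]]].
  rewrite (Galpha_limit delta pc N d qc al z L w lu Hdelta Hpmon ltac:(lra) HL Hlu).
  rewrite (Gh_limit al gamma N d qc (Cmul (Cexp (Cscal (- al) L)) w) lv Hlv). exact Hclose.
Qed.
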